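(* Let $w\colon E\to(0,\infty)$ be a weight function on the edges of the hypercube graph satisfying $\sigma^*w=w$ for all permutations $\sigma$ of $N$. Then for every game $v$ on $N$ and every $i\in N$, $v_{i,w}(N)=\phi_i(v)$, where $v_{i,w}$ is the unique function with $v_{i,w}(\emptyset)=0$ and $\mathrm{d}v_{i,w}=P_w\mathrm{d}_iv$, and $$\phi_i(v)=\sum_{S\subset N\setminus\{i\}} \frac{|S|!\,(|N|-1-|S|)!}{|N|!}\bigl(v(S\cup\{i\})-v(S)\bigr)$$ is the Shapley value.
   Context: Let $N$ be a finite set of players. A game is a function $v\colon 2^N\to\mathbb{R}$ with $v(\emptyset)=0$. The hypercube graph $G=(V,E)$ has $V=2^N$ and oriented edges $E=\{(S,S\cup\{i\}) : i\in N,\ S\subset N\setminus\{i\}\}$. $\ell^2(V)$ is the space of real functions on $V$. Given $w\colon E\to(0,\infty)$, $\ell^2_w(E)$ is the space of real functions on $E$ with inner product $\langle f,g\rangle_w=\sum_{e\in E}w(e)f(e)g(e)$. $\mathrm{d}\colon \ell^2(V)\to\ell^2_w(E)$ is $\mathrm{d}u(S,S\cup\{i\}) = u(S\cup\{i\})-u(S)$, with range $\mathcal{R}(\mathrm{d})$. For $i\in N$, $\mathrm{d}_i\colon\ell^2(V)\to\ell^2_w(E)$ is defined by $\mathrm{d}_i u(S,S\cup\{j\}) = u(S\cup\{i\})-u(S)$ if $j=i$ and $0$ if $j\ne i$. $P_w$ is the $\langle\cdot,\cdot\rangle_w$-orthogonal projection of $\ell^2_w(E)$ onto $\mathcal{R}(\mathrm{d})$.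 For a permutation $\sigma$ of $N$, $(\sigma^*w)(S,S\cup\{i\}) = w(\sigma(S),\sigma(S)\cup\{\sigma(i)\})$. *)

From HB Require Import structures.
From mathcomp Require Import all_boot all_order all_algebra.
From mathcomp Require Import perm.
Set Implicit Arguments. Unset Strict Implicit. Unset Printing Implicit Defensive.
Import Order.TTheory GRing.Theory Num.Theory.
Local Open Scope ring_scope.

(* Players: a finite type T; N = [set: T].  Vertices V = {set T}.
   An oriented edge (S, S ∪ {i}) with i ∉ S is encoded as the pair (S, i).
   Functions on E are functions f : {set T} -> T -> R, only their values on
   edges (i \notin S) matter. *)

Section Hypercube.
Variables (R : realFieldType) (T : finType).

Definition edge_fun := {set T} -> T -> R.

Definition dgrad (u : {set T} -> R) : edge_fun :=
  fun S i => u (S :|: [set i]) - u S.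

Definition dgrad_i (i : T) (u : {set T} -> R) : edge_fun :=
  fun S j => if j == i then u (S :|: [set i]) - u S else 0.

Definition edge_eq (f g : edge_fun) : Prop :=
  forall (S : {set T}) (j : T), j \notin S -> f S j = g S j.

Definition winner (w f g : edge_fun) : R :=
  \sum_(S : {set T}) \sum_(j : T | j \notin S) w S j * f S j * g S j.

Definition in_range_d (f : edge_fun) : Prop :=
  exists u : {set T} -> R, edge_eq f (dgrad u).

Definition is_proj_w (w f p : edge_fun) : Prop :=
  in_range_d p /\
  forall g, in_range_d g -> winner w (fun S j => f S j - p S j) g = 0.

Definition pos_weight (w : edge_fun) : Prop :=
  forall (S : {set T}) (j : T), j \notin S -> 0 < w S j.

Definition perm_invariant (w : edge_fun) : Prop :=
  forall (s : {perm T}) (S : {set T}) (j : T), j \notin S -> w (s @: S) (s j) = w S j.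

Definition is_viw (w : edge_fun) (v : {set T} -> R) (i : T)
  (u : {set T} -> R) : Prop :=
  u set0 = 0 /\ is_proj_w w (dgrad_i i v) (dgrad u).

Definition shapley (v : {set T} -> R) (i : T) : R :=
  \sum_(S : {set T} | i \notin S)
    ((#|S|`! * (#|T| - 1 - #|S|)`!)%:R / (#|T|`!)%:R) * (v (S :|: [set i]) - v S).

End Hypercube.

(* The projection exists because the Gram matrix of the positive definite form
   <du, dg>_w + u(∅) g(∅) is invertible.  For its value: by symmetry w(S, S ∪ {j})
   depends only on |S|, so some h has w · dh equal to the Shapley weight c_|S| on
   every edge.  Testing the orthogonality of d_i v - du against dh gives
   Σ c_|S| d_i v = Σ c_|S| du.  The left side is φ_i(v); the right side telescopes to
   u(N) - u(∅) = u(N), since |S| c_(|S|-1) - (n - |S|) c_|S| vanishes unless S is ∅ or N. *)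

From HB Require Import structures.
From mathcomp Require Import all_boot all_order all_algebra.
From mathcomp Require Import perm zify ring.
Import Order.TTheory GRing.Theory Num.Theory.
Local Open Scope ring_scope.

Set Implicit Arguments.
Unset Strict Implicit.

Section Relabel.
Variables (T : finType) (s1 s2 : seq T).
Hypotheses (s1_full : forall x, x \in s1) (s1_uniq : uniq s1) (s2_uniq : uniq s2).
Hypothesis eq_size : size s1 = size s2.

Definition relabel (x : T) : T := nth x s2 (index x s1).

Lemma relabel_inj : injective relabel.
Proof.
move=> x y; rewrite /relabel.
have ltx : (index x s1 < size s2)%N by rewrite -eq_size index_mem.
have lty : (index y s1 < size s2)%N by rewrite -eq_size index_mem.
rewrite (set_nth_default x y lty) => /(uniqP x s2_uniq _ _ ltx lty)/(congr1 (nth x s1)).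
by rewrite !nth_index.
Qed.

Lemma relabel_nth (x0 : T) (k : nat) :
  (k < size s1)%N -> perm relabel_inj (nth x0 s1 k) = nth x0 s2 k.
Proof.
move=> ltk; rewrite permE /relabel index_uniq //.
by apply: set_nth_default; rewrite -eq_size.
Qed.

End Relabel.

Section EdgeOrder.
Variable T : finType.

(* An enumeration of [T] listing [S] first and then [j]: relabelling one such
   enumeration into another maps the edge (S, j) to the edge (S', j'). *)
Definition edge_order (S : {set T}) (j : T) : seq T :=
  enum S ++ j :: enum (~: (j |: S)).

Lemma mem_edge_order (S : {set T}) (j x : T) : x \in edge_order S j.
Proof.
rewrite mem_cat inE !mem_enum !inE.
by case: (x \in S); case: (x == j); rewrite ?orbT.
Qed.

Lemma edge_order_uniq (S : {set T}) (j : T) : j \notin S -> uniq (edge_order S j).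
Proof.
move=> jS; rewrite cat_uniq /= !enum_uniq andbT negb_or !mem_enum jS !inE eqxx /=.
rewrite andbT; apply/hasPn => x.
by rewrite /= !mem_enum !inE negb_or => /andP[_].
Qed.

Lemma size_edge_order (S : {set T}) (j : T) : j \notin S -> size (edge_order S j) = #|T|.
Proof.
by move=> jS; rewrite size_cat /= -!cardE -(cardsC (j |: S)) cardsU1 jS addnS.
Qed.

Lemma nth_edge_order_card (S : {set T}) (j x0 : T) : nth x0 (edge_order S j) #|S| = j.
Proof. by rewrite nth_cat -cardE ltnn subnn. Qed.

Lemma nth_edge_order_in (S : {set T}) (j x0 : T) (k : nat) :
  (k < #|S|)%N -> nth x0 (edge_order S j) k \in S.
Proof. by move=> ltk; rewrite nth_cat -cardE ltk -mem_enum mem_nth // -cardE. Qed.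

End EdgeOrder.

Lemma perm_invariant_card (R : realFieldType) (T : finType) (w : edge_fun R T)
  (S S' : {set T}) (j j' : T) :
  perm_invariant w -> j \notin S -> j' \notin S' -> #|S| = #|S'| -> w S j = w S' j'.
Proof.
move=> wsym jS jS' eqS.
have eq_size : size (edge_order S j) = size (edge_order S' j').
  by rewrite !size_edge_order.
pose p := perm (relabel_inj (@mem_edge_order _ S j) (edge_order_uniq jS') eq_size).
have pE k x0 : (k < #|T|)%N -> p (nth x0 (edge_order S j) k) = nth x0 (edge_order S' j') k.
  by move=> ltk; apply: relabel_nth; rewrite ?edge_order_uniq ?size_edge_order.
have ltS : (#|S| < #|T|)%N.
  by rewrite -(size_edge_order jS) size_cat -cardE /= addnS ltnS leq_addr.
have pj : p j = j'.
  by rewrite -{1}(nth_edge_order_card S j j) pE // eqS nth_edge_order_card.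
have pS : p @: S = S'.
  apply/eqP; rewrite eqEcard card_imset ?eqS ?leqnn ?andbT; last exact: perm_inj.
  apply/subsetP => _ /imsetP[x xS ->].
  have ltx : (index x (enum S) < #|S|)%N by rewrite cardE index_mem mem_enum.
  have {1}-> : x = nth x (edge_order S j) (index x (enum S)).
    by rewrite nth_cat -cardE ltx nth_index ?mem_enum.
  by rewrite pE ?nth_edge_order_in -?eqS // (ltn_trans ltx).
by rewrite -(wsym p S j jS) pS pj.
Qed.

Section ShapleyWeight.
Variable R : realFieldType.

Definition shapley_weight (n k : nat) : R := (k`! * (n - 1 - k)`!)%:R / (n`!)%:R.

Lemma shapley_weight_balance (n s : nat) : (0 < n)%N -> (s <= n)%N ->
  s%:R * shapley_weight n s.-1 - (n - s)%:R * shapley_weight n s =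
  (s == n)%:R - (s == 0)%:R.
Proof.
move=> n_gt0 le_sn; rewrite /shapley_weight !mulrA -!natrM.
have nfact_neq0 : (n`!)%:R != 0 :> R by rewrite pnatr_eq0 -lt0n fact_gt0.
case: n n_gt0 le_sn nfact_neq0 => // n _ le_sn nfact_neq0.
case: s le_sn => [|s] le_sn.
  by rewrite mul0n mul0r sub0r subn0 subn1 subn0 fact0 mul1n -factS mulfV // sub0r.
rewrite /= !subn1 /=; case: (ltngtP s n) le_sn => [lt_sn _ | gt_sn | -> _].
  have -> : (s.+1 * (s`! * (n - s)`!) = (n.+1 - s.+1) * (s.+1`! * (n - s.+1)`!))%N.
    rewrite subSS; have -> : (n - s = (n - s.+1).+1)%N by lia.
    by rewrite !factS; lia.
  by rewrite subrr eqSS (ltn_eqF lt_sn) subr0.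
- by rewrite ltnS leqNgt gt_sn.
by rewrite !subnn mul0n mul0r subr0 fact0 muln1 -factS mulfV // eqxx subr0.
Qed.

End ShapleyWeight.

Section Telescope.
Variables (R : realFieldType) (T : finType).
Implicit Types (a : nat -> R) (g : {set T} -> R).

Lemma sum_edges_source a g :
  \sum_(S : {set T}) \sum_(j : T | j \notin S) a #|S| * g S =
  \sum_(S : {set T}) (#|T| - #|S|)%:R * a #|S| * g S.
Proof.
apply: eq_bigr => S _; rewrite (eq_bigl (fun j => j \in ~: S)) => [|j]; last by rewrite inE.
by rewrite sumr_const [#|~: S|]cardsCs setCK -mulrA mulr_natl.
Qed.

Lemma sum_edges_target a g :
  \sum_(S : {set T}) \sum_(j : T | j \notin S) a #|S| * g (S :|: [set j]) =
  \sum_(X : {set T}) #|X|%:R * a #|X|.-1 * g X.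
Proof.
have into_target j : \sum_(S : {set T} | j \notin S) a #|S| * g (S :|: [set j]) =
    \sum_(X : {set T} | j \in X) a #|X|.-1 * g X.
  rewrite (reindex_onto (fun X => X :\ j) (fun S => S :|: [set j])) /=; last first.
    by move=> S jS; rewrite setUC setU1K.
  apply: eq_big => [X | X /andP[_ /eqP eX]].
    rewrite !inE eqxx /= setUC; case: (boolP (j \in X)) => [jX | jNX].
      by rewrite setD1K // eqxx.
    by apply/negbTE; apply: contra jNX => /eqP <-; rewrite setU11.
  have jX : j \in X by rewrite -eX !inE eqxx orbT.
  by rewrite eX (cardsD1 j X) jX.
rewrite (exchange_big_dep xpredT) //=; under eq_bigr do rewrite into_target.
rewrite (exchange_big_dep xpredT) //=; apply: eq_bigr => X _.
by rewrite sumr_const -mulrA mulr_natl.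
Qed.

Lemma sum_card_extremes g :
  \sum_(X : {set T}) ((#|X| == #|T|)%:R - (#|X| == 0)%:R) * g X = g setT - g set0.
Proof.
under eq_bigr do rewrite mulrBl.
rewrite sumrB (bigD1 setT) //= (bigD1 set0 (isT : predT _)) //= cardsT cards0 !eqxx !mul1r.
rewrite !big1 ?addr0 // => X.
  by rewrite cards_eq0 => /negbTE->; rewrite mul0r.
move=> XT; rewrite (_ : (#|X| == #|T|) = false) ?mul0r //.
by apply: contraNF XT => /eqP eXT; rewrite eqEcard subsetT cardsT eXT leqnn.
Qed.

Lemma shapley_weight_telescope g : (0 < #|T|)%N ->
  \sum_(S : {set T}) \sum_(j : T | j \notin S)
     shapley_weight R #|T| #|S| * (g (S :|: [set j]) - g S) = g setT - g set0.
Proof.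
move=> T_gt0.
under eq_bigr do under eq_bigr do rewrite mulrBr.
under eq_bigr do rewrite sumrB.
rewrite sumrB sum_edges_target sum_edges_source -sumrB -sum_card_extremes.
apply: eq_bigr => X _.
by rewrite -mulrBl shapley_weight_balance // max_card.
Qed.

End Telescope.

Section ShapleyTest.
Variables (R : realFieldType) (T : finType) (w : edge_fun R T).
Hypotheses (w_pos : pos_weight w) (w_sym : perm_invariant w).

Lemma shapley_edge_sum (v : {set T} -> R) (i : T) :
  shapley v i =
  \sum_(S : {set T}) \sum_(j : T | j \notin S) shapley_weight R #|T| #|S| * dgrad_i i v S j.
Proof.
rewrite /shapley big_mkcond; apply: eq_bigr => S _; case: ifPn => [iNS | /negPn iS].
  rewrite [RHS](bigD1 i) //= big1 ?addr0 => [|j /andP[_ /negbTE ji]].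
    by rewrite /dgrad_i eqxx.
  by rewrite /dgrad_i ji mulr0.
rewrite big1 // => j jS; rewrite /dgrad_i; case: eqP => [ji | _]; last by rewrite mulr0.
by rewrite ji iS in jS.
Qed.

(* By symmetry [w S j] only depends on [#|S|]; the default [1] is for empty levels. *)
Definition level_weight (k : nat) : R :=
  if [pick e : {set T} * T | (e.2 \notin e.1) && (#|e.1| == k)] is Some e
  then w e.1 e.2 else 1.

Lemma level_weightE (S : {set T}) (j : T) : j \notin S -> level_weight #|S| = w S j.
Proof.
move=> jS; rewrite /level_weight; case: pickP => [e /andP[e2N /eqP eS] | noedge].
  exact: perm_invariant_card.
by have := noedge (S, j); rewrite /= jS eqxx.
Qed.

Definition shapley_test (S : {set T}) : R :=
  \sum_(k < #|S|) shapley_weight R #|T| k / level_weight k.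

Lemma weighted_dgrad_shapley_test (S : {set T}) (j : T) : j \notin S ->
  w S j * dgrad shapley_test S j = shapley_weight R #|T| #|S|.
Proof.
move=> jS; rewrite /dgrad /shapley_test setUC cardsU1 jS big_ord_recr /= addrC addrK.
by rewrite (level_weightE jS) mulrC mulfVK // lt0r_neq0 // w_pos.
Qed.

Lemma winner_shapley_test (f : edge_fun R T) :
  winner w f (dgrad shapley_test) =
  \sum_(S : {set T}) \sum_(j : T | j \notin S) shapley_weight R #|T| #|S| * f S j.
Proof.
apply: eq_bigr => S _; apply: eq_bigr => j jS.
by rewrite mulrAC weighted_dgrad_shapley_test // mulrC.
Qed.

Lemma viw_shapley (v : {set T} -> R) (i : T) (u : {set T} -> R) :
  is_viw w v i u -> u [set: T] = shapley v i.
Proof.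
case=> u0 [_ orth_range]; have T_gt0 : (0 < #|T|)%N by apply/card_gt0P; exists i.
have := orth_range _ (ex_intro _ shapley_test (fun _ _ _ => erefl)).
rewrite winner_shapley_test.
under eq_bigr do under eq_bigr do rewrite mulrBr.
under eq_bigr do rewrite sumrB.
rewrite sumrB -shapley_edge_sum shapley_weight_telescope // u0 subr0.
by move/eqP; rewrite subr_eq0 => /eqP.
Qed.

End ShapleyTest.

Section Projection.
Variables (R : realFieldType) (T : finType) (w : edge_fun R T).
Hypothesis w_pos : pos_weight w.

Definition vertex_indicator (Y : {set T}) : {set T} -> R := fun X => (X == Y)%:R.

Lemma vertex_expansion (u : {set T} -> R) (X : {set T}) :
  u X = \sum_(Y : {set T}) u Y * vertex_indicator Y X.
Proof.
rewrite (bigD1 X) //= /vertex_indicator eqxx mulr1 big1 ?addr0 // => Y /negbTE YX.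
by rewrite eq_sym YX mulr0.
Qed.

Lemma winner_dgrad_expansion (f : edge_fun R T) (g : {set T} -> R) :
  winner w f (dgrad g) =
  \sum_(Y : {set T}) g Y * winner w f (dgrad (vertex_indicator Y)).
Proof.
under [RHS]eq_bigr do rewrite mulr_sumr; rewrite exchange_big; apply: eq_bigr => S _.
under [RHS]eq_bigr do rewrite mulr_sumr; rewrite exchange_big; apply: eq_bigr => j _.
rewrite /dgrad [g (S :|: _)]vertex_expansion [g S]vertex_expansion -sumrB mulr_sumr.
by apply: eq_bigr => Y _; ring.
Qed.

(* [u ∅ g ∅] makes the form definite: [dgrad] only sees [u] up to constants. *)
Definition dirichlet_form (u g : {set T} -> R) : R :=
  winner w (dgrad u) (dgrad g) + u set0 * g set0.

Lemma dirichlet_formC (u g : {set T} -> R) : dirichlet_form u g = dirichlet_form g u.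
Proof.
rewrite /dirichlet_form /winner [u set0 * _]mulrC; congr (_ + _).
by apply: eq_bigr => S _; apply: eq_bigr => j _; ring.
Qed.

Lemma dirichlet_form_expansion (u g : {set T} -> R) :
  dirichlet_form u g = \sum_(Y : {set T}) g Y * dirichlet_form u (vertex_indicator Y).
Proof.
rewrite /dirichlet_form winner_dgrad_expansion [g set0]vertex_expansion.
by rewrite mulr_sumr -big_split; apply: eq_bigr => Y _ /=; ring.
Qed.

Lemma dgrad_eq0_const (u : {set T} -> R) :
  u set0 = 0 -> edge_eq (dgrad u) (fun _ _ => 0) -> forall S, u S = 0.
Proof.
move=> u0 du0; suff card_ind n (S : {set T}) : #|S| = n -> u S = 0 by move=> S; apply: card_ind.
elim: n S => [|n IHn] S.
  by move/eqP; rewrite cards_eq0 => /eqP->.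
case: (set_0Vmem S) => [-> | [j jS] cardS]; first by rewrite cards0.
have jNSj : j \notin S :\ j by rewrite setD11.
move/eqP: (du0 _ _ jNSj); rewrite subr_eq0 setUC setD1K // => /eqP->.
by apply: IHn; move: cardS; rewrite (cardsD1 j S) jS add1n => -[].
Qed.

Lemma dirichlet_form_anisotropic (u : {set T} -> R) :
  dirichlet_form u u = 0 -> forall S, u S = 0.
Proof.
have edge_ge0 (S : {set T}) (j : T) : j \notin S -> 0 <= w S j * dgrad u S j * dgrad u S j.
  by move=> jS; rewrite -mulrA -expr2 mulr_ge0 ?sqr_ge0 // ltW ?w_pos.
have vertex_ge0 (S : {set T}) : 0 <= \sum_(j | j \notin S) w S j * dgrad u S j * dgrad u S j.
  by apply: sumr_ge0 => j; apply: edge_ge0.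
move/eqP; rewrite paddr_eq0 -?expr2 ?sqr_ge0 ?sumr_ge0 //.
case/andP=> /eqP/(psumr_eq0P (fun S _ => vertex_ge0 S)) edges0.
rewrite mulf_eq0 orbb => /eqP u0; apply: dgrad_eq0_const => // S j jS.
move/eqP: (@psumr_eq0P _ _ _ _ (edge_ge0 S) (edges0 S isT) j jS).
by rewrite -mulrA mulf_eq0 (negbTE (lt0r_neq0 (w_pos jS))) mulf_eq0 orbb => /eqP.
Qed.

Local Notation n := #|{set T}|.

Definition gram_matrix : 'M[R]_n :=
  \matrix_(k, l) dirichlet_form (vertex_indicator (enum_val k)) (vertex_indicator (enum_val l)).

Definition fun_of_row (x : 'rV[R]_n) : {set T} -> R := fun S => x 0 (enum_rank S).

Lemma mul_row_gram (x : 'rV[R]_n) (l : 'I_n) :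
  (x *m gram_matrix) 0 l = dirichlet_form (fun_of_row x) (vertex_indicator (enum_val l)).
Proof.
rewrite mxE dirichlet_formC dirichlet_form_expansion.
rewrite [RHS](reindex _ (onW_bij _ (enum_val_bij _))); apply: eq_bigr => k _.
by rewrite /fun_of_row enum_valK mxE dirichlet_formC.
Qed.

Lemma gram_matrix_unit : gram_matrix \in unitmx.
Proof.
rewrite -row_free_unit; apply: inj_row_free => x x_ker.
have form0 : dirichlet_form (fun_of_row x) (fun_of_row x) = 0.
  rewrite dirichlet_form_expansion big1 // => Y _.
  by rewrite -[Y]enum_rankK -mul_row_gram x_ker mxE mulr0.
apply/rowP => k; rewrite mxE.
by have := dirichlet_form_anisotropic form0 (enum_val k); rewrite /fun_of_row enum_valK.
Qed.

Lemma dirichlet_form_solvable (b : {set T} -> R) :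
  exists u, forall g, dirichlet_form u g = \sum_(Y : {set T}) g Y * b Y.
Proof.
pose x := \row_(l < n) b (enum_val l) *m invmx gram_matrix.
exists (fun_of_row x) => g; rewrite dirichlet_form_expansion; apply: eq_bigr => Y _.
by rewrite -[Y]enum_rankK -mul_row_gram mulmxKV ?gram_matrix_unit // mxE.
Qed.

Lemma proj_w_exists (f : edge_fun R T) :
  exists u, u set0 = 0 /\ is_proj_w w f (dgrad u).
Proof.
have [u u_sol] := dirichlet_form_solvable
  (fun Y => winner w f (dgrad (vertex_indicator Y))).
have winner_dgrad_cst (h : edge_fun R T) : winner w h (dgrad (fun _ => 1)) = 0.
  by rewrite /winner big1 // => S _; rewrite big1 // => j _; rewrite /dgrad subrr mulr0.
have u_normal g : dirichlet_form u g = winner w f (dgrad g).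
  by rewrite u_sol winner_dgrad_expansion.
have u0 : u set0 = 0.
  by have := u_normal (fun _ => 1); rewrite /dirichlet_form !winner_dgrad_cst add0r mulr1.
exists u; split; [done | split; first by exists u].
move=> h [g dg]; transitivity (winner w f (dgrad g) - winner w (dgrad u) (dgrad g)).
  rewrite /winner -sumrB; apply: eq_bigr => S _; rewrite -sumrB.
  by apply: eq_bigr => j jS; rewrite dg //; ring.
by rewrite -u_normal /dirichlet_form u0 mul0r addr0 subrr.
Qed.

End Projection.

Unset Implicit Arguments.
Set Strict Implicit.

Theorem corollary4p2 (R : realFieldType) (T : finType) (w : edge_fun R T)
  (hpos : pos_weight w) (hsym : perm_invariant w)
  (v : {set T} -> R) (hv : v set0 = 0) (i : T) :
  (exists u : {set T} -> R, is_viw w v i u) /\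
  (forall u : {set T} -> R, is_viw w v i u -> u [set: T] = shapley v i).
Proof.
split; last exact: viw_shapley.
have [u [u0 proj_u]] := proj_w_exists hpos (dgrad_i i v).
by exists u.
Qed.
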